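(* Let $(E,\|\cdot\|)$ be a real Banach space with metric $d(x,y)=\|x-y\|$, $I=[a,b]$ a closed real interval, $E_0=C(I,E)$ the space of continuous functions $I\to E$ with the supremum norm $\|\varphi\|_0=\sup_{t\in I}\|\varphi(t)\|$ and metric $D(\varphi,\xi)=\|\varphi-\xi\|_0$, and fix $c\in I$. Let $\mathcal{K}$ be the set of constant functions in $E_0$. Let $\alpha:E\times E\to[0,\infty)$, $\mathcal{T}:E_0\to E$ and $k\in[0,1)$ satisfy: (1) ($(\alpha,k)$-contractive) $\alpha(\varphi(c),\mathcal{T}\varphi)\,\alpha(\xi(c),\mathcal{T}\xi)\,d(\mathcal{T}\varphi,\mathcal{T}\xi)\le k\,D(\varphi,\xi)$ for all $\varphi,\xi\in E_0$; (2) ($\alpha$-admissible) for all $\varphi,\xi\in E_0$, $\alpha(\varphi(c),\xi(c))\ge1$ implies $\alpha(\mathcal{T}\varphi,\mathcal{T}\xi)\ge1$; (3) ($E_0$-closed) whenever $(\varphi_n)_{n\ge0}$ in $E_0$ and $\varphi\in E_0$ satisfy $\alpha(\varphi_n(c),\mathcal{T}\varphi_n)\ge1$ for all $n$ and $D(\varphi_n,\varphi)\to0$, then $\alpha(\varphi(c),\mathcal{T}\varphi)\ge1$; (4) ($E_0$-starting) there exists $\varphi_0\in E_0$ with $\alpha(\varphi_0(c),\mathcal{T}\varphi_0)\ge1$. Then: (i) there exists $\varphi_0\in\mathcal{K}$ with $\alpha(\varphi_0(c),\mathcal{T}\varphi_0)\ge1$; (ii) for every $\varphi_0\in\mathcal{K}$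 with $\alpha(\varphi_0(c),\mathcal{T}\varphi_0)\ge1$, the sequence $(\varphi_n)_{n\ge0}$ in $\mathcal{K}$ defined by $\varphi_{n+1}(c)=\mathcal{T}\varphi_n$ ($n\ge0$) $D$-converges to some $\varphi^*\in\mathcal{K}$ with $\mathcal{T}\varphi^*=\varphi^*(c)$ and $\alpha(\varphi^*(c),\mathcal{T}\varphi^* )\ge1$; (iii) there is exactly one $\varphi^*\in\mathcal{K}$ with $\mathcal{T}\varphi^*=\varphi^*(c)$ and $\alpha(\varphi^*(c),\mathcal{T}\varphi^* )\ge1$.
   Context: A point $\varphi\in E_0$ with $\mathcal{T}\varphi=\varphi(c)$ is called a PPF dependent fixed point of $\mathcal{T}$. Elements of $\mathcal{K}$ are determined by their value at $c$, so the sequence in (ii) is well defined. *)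

From HB Require Import structures.
From mathcomp Require Import all_boot all_order all_algebra.
From mathcomp Require Import all_classical all_reals all_analysis.
Set Implicit Arguments. Unset Strict Implicit. Unset Printing Implicit Defensive.
Import Order.TTheory GRing.Theory Num.Theory.
Import numFieldNormedType.Exports.
Local Open Scope classical_set_scope.
Local Open Scope ring_scope.

Definition Itv (R : realType) (a b : R) := {t : R | a <= t <= b}.

Definition cont_on_I (R : realType) (E : normedModType R) (a b : R)
  (f : Itv a b -> E) : Prop :=
  forall t : Itv a b, forall eps : R, 0 < eps ->
    exists2 delta : R, 0 < delta &
      forall s : Itv a b, `|sval s - sval t| < delta -> `|f s - f t| < eps.

Record C0 (R : realType) (E : normedModType R) (a b : R) := MkC0 {
  cfun :> Itv a b -> E;
  cfun_cont : cont_on_I cfun }.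

Definition Dsup (R : realType) (E : normedModType R) (a b : R)
  (phi xi : C0 E a b) : R :=
  sup [set `|phi t - xi t| | t in [set: Itv a b]].

Definition is_const (R : realType) (E : normedModType R) (a b : R)
  (phi : C0 E a b) : Prop :=
  exists x : E, forall t : Itv a b, phi t = x.

From HB Require Import structures.
From mathcomp Require Import all_boot all_order all_algebra.
From mathcomp Require Import all_classical all_reals all_analysis.
Import Order.TTheory GRing.Theory Num.Theory.
Import numFieldNormedType.Exports.
Local Open Scope classical_set_scope.
Local Open Scope ring_scope.

(* On constant functions D is the distance of E, so T induces the map
   x |-> T (cst x) on E.  On the set of points x with alpha(x, T (cst x)) >= 1
   this map is a k-contraction (condition (1)) which preserves the set
   (condition (2)), hence its Picard iterates converge by Banach's argument;
   condition (3) puts the limit back into the set, where continuity of the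
   contraction makes it a fixed point, unique by contractivity. *)

Section constant_functions.
Context {R : realType} {E : normedModType R} {a b : R}.

Lemma cont_on_I_cst (x : E) : cont_on_I (fun _ : Itv a b => x).
Proof. by move=> t e e_gt0; exists 1 => // s _; rewrite subrr normr0. Qed.

Definition cst (x : E) : C0 E a b := MkC0 (cont_on_I_cst x).

Lemma is_const_cst (x : E) : is_const (cst x).
Proof. by exists x. Qed.

Variable c : Itv a b.

Lemma is_constE {phi : C0 E a b} : is_const phi -> phi = cst (phi c).
Proof.
case: phi => f f_cont [x /= fx].
have f_cst : f = fun=> f c by apply: funext => t; rewrite !fx.
rewrite /cst; move: (cont_on_I_cst _); rewrite -f_cst => f_cont'.
by congr MkC0; apply: Prop_irrelevance.
Qed.

Lemma Dsup_cst (x y : E) : Dsup (cst x) (cst y) = `|x - y|.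
Proof.
rewrite /Dsup; have -> : [set `|cst x t - cst y t| | t in [set: Itv a b]] =
    [set `|x - y|] by apply/seteqP; split=> [_ [t _ <-] //|_ ->]; exists c.
exact: sup1.
Qed.

End constant_functions.

Section alpha_contraction.
Context {R : realType} {E : completeNormedModType R} {a b : R} {c : Itv a b}.
Context {alpha : E -> E -> R} {T : C0 E a b -> E} {k : R}.
Hypotheses (k_ge0 : 0 <= k) (k_lt1 : k < 1).
Hypothesis contractive : forall phi xi : C0 E a b,
  alpha (phi c) (T phi) * alpha (xi c) (T xi) * `|T phi - T xi|
    <= k * Dsup phi xi.
Hypothesis admissible : forall phi xi : C0 E a b,
  1 <= alpha (phi c) (xi c) -> 1 <= alpha (T phi) (T xi).
Hypothesis E0_closed : forall (phin : nat -> C0 E a b) (phi : C0 E a b),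
  (forall n, 1 <= alpha (phin n c) (T (phin n))) ->
  (fun n => Dsup (phin n) phi) @ \oo --> 0 ->
  1 <= alpha (phi c) (T phi).

Definition Tcst (x : E) : E := T (cst x).

Definition starting : set E := [set x | 1 <= alpha x (Tcst x)].

Lemma starting_T {phi : C0 E a b} :
  1 <= alpha (phi c) (T phi) -> starting (T phi).
Proof. exact: (admissible phi (cst (T phi))). Qed.

Lemma starting_Tcst : {homo Tcst : x / starting x}.
Proof. by move=> x; apply: (@starting_T (cst x)). Qed.

Lemma Tcst_const {phi : C0 E a b} : is_const phi -> Tcst (phi c) = T phi.
Proof. by move=> /(is_constE c) {2}->. Qed.

Lemma starting_const {phi : C0 E a b} :
  is_const phi -> 1 <= alpha (phi c) (T phi) -> starting (phi c).
Proof. by move=> phi_const; rewrite /starting /= (Tcst_const phi_const). Qed.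

Lemma Tcst_lipschitz : k.-lipschitz_starting Tcst.
Proof.
case=> x y [/= x_start y_start].
have alpha_prod : 1 <= alpha x (Tcst x) * alpha y (Tcst y).
  by rewrite -[1]mul1r ler_pM.
rewrite /= -[X in k * X](Dsup_cst c).
apply: le_trans (contractive (cst x) (cst y)).
by rewrite -[leLHS]mul1r ler_wpM2r.
Qed.

Lemma Tcst_contraction :
  contraction (NngNum k_ge0) (mkfun_fun starting_Tcst).
Proof. by split; [exact: k_lt1 | exact: Tcst_lipschitz]. Qed.

Lemma starting_cvg {u : nat -> E} {l : E} :
  (forall n, starting (u n)) -> u n @[n --> \oo] --> l -> starting l.
Proof.
move=> u_start u_l; apply: (E0_closed (cst \o u) (cst l)) => //.
rewrite (_ : (fun n => _) = fun n => `|u n - l|); last first.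
  by apply: funext => n /=; rewrite (Dsup_cst c).
by apply/norm_cvg0P/subr_cvg0.
Qed.

Lemma Tcst_cvg {u : nat -> E} {l : E} :
  (forall n, starting (u n)) -> starting l ->
  u n @[n --> \oo] --> l -> Tcst (u n) @[n --> \oo] --> Tcst l.
Proof.
move=> u_start l_start /cvgrPdist_le u_l; apply/cvgrPdist_le => e e_gt0.
apply: filterS (u_l e e_gt0) => n ul_le; rewrite (le_trans _ ul_le) //.
apply: le_trans (Tcst_lipschitz (l, u n) (conj l_start (u_start n))) _.
by rewrite /= ler_piMl // ltW.
Qed.

Lemma iter_Tcst_fixpoint {x : E} : starting x ->
  exists2 l, iter n Tcst x @[n --> \oo] --> l & starting l /\ Tcst l = l.
Proof.
move=> x_start; set u := fun n => iter n Tcst x.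
have u_start n : starting (u n).
  by elim: n => [|n]; [exact: x_start | exact: starting_Tcst].
have u_l : u n @[n --> \oo] --> limn u.
  exact: (contraction_cvg Tcst_contraction x_start).
have l_start := starting_cvg u_start u_l.
exists (limn u) => //; split=> //.
apply: (norm_cvg_unique (Tcst_cvg u_start l_start u_l)).
by move: u_l; rewrite -cvg_shiftS.
Qed.

Lemma starting_fixpoint_unique {x y : E} : starting x -> starting y ->
  Tcst x = x -> Tcst y = y -> x = y.
Proof.
move=> x_start y_start Tx Ty.
by apply: (contraction_fixpoint_unique (f := mkfun_fun starting_Tcst))
  => //; exists (NngNum k_ge0); exact: Tcst_contraction.
Qed.

Lemma const_picard_cvg (phi : nat -> C0 E a b) :
  1 <= alpha (phi 0%N c) (T (phi 0%N)) -> (forall n, is_const (phi n)) ->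
  (forall n, phi n.+1 c = T (phi n)) ->
  exists phis : C0 E a b,
    [/\ is_const phis, (fun n => Dsup (phi n) phis) @ \oo --> 0,
        T phis = phis c & 1 <= alpha (phis c) (T phis)].
Proof.
move=> phi0_start phi_const phiS.
have phi_iter n : phi n c = iter n Tcst (phi 0%N c).
  by elim: n => [//|n IHn]; rewrite phiS -(Tcst_const (phi_const n)) IHn.
have [l phi_l [l_start Tl]] :=
  iter_Tcst_fixpoint (starting_const (phi_const 0%N) phi0_start).
exists (cst l); split=> //; first exact: is_const_cst.
rewrite (_ : (fun n => _) = fun n => `|iter n Tcst (phi 0%N c) - l|).
  exact/norm_cvg0P/subr_cvg0.
apply: funext => n.
by rewrite (is_constE c (phi_const n)) (Dsup_cst c) phi_iter.
Qed.

End alpha_contraction.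

Theorem theorem6 (R : realType) (E : completeNormedModType R) (a b : R)
  (c : Itv a b) (alpha : E -> E -> R) (T : C0 E a b -> E) (k : R) :
  (forall x y : E, 0 <= alpha x y) ->
  0 <= k -> k < 1 ->
  (* (1) (alpha,k)-contractive *)
  (forall phi xi : C0 E a b,
     alpha (phi c) (T phi) * alpha (xi c) (T xi) * `|T phi - T xi|
       <= k * Dsup phi xi) ->
  (* (2) alpha-admissible *)
  (forall phi xi : C0 E a b, 1 <= alpha (phi c) (xi c) -> 1 <= alpha (T phi) (T xi)) ->
  (* (3) E_0-closed *)
  (forall (phin : nat -> C0 E a b) (phi : C0 E a b),
     (forall n, 1 <= alpha (phin n c) (T (phin n))) ->
     (fun n => Dsup (phin n) phi) @ \oo --> 0 ->
     1 <= alpha (phi c) (T phi)) ->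
  (* (4) E_0-starting *)
  (exists phi0 : C0 E a b, 1 <= alpha (phi0 c) (T phi0)) ->
  (* (i) *)
  (exists phi0 : C0 E a b, is_const phi0 /\ 1 <= alpha (phi0 c) (T phi0))
  /\
  (* (ii) *)
  (forall phi : nat -> C0 E a b,
     is_const (phi 0%N) -> 1 <= alpha (phi 0%N c) (T (phi 0%N)) ->
     (forall n, is_const (phi n)) ->
     (forall n, phi n.+1 c = T (phi n)) ->
     exists phis : C0 E a b,
       [/\ is_const phis,
           (fun n => Dsup (phi n) phis) @ \oo --> 0,
           T phis = phis c &
           1 <= alpha (phis c) (T phis)])
  /\
  (* (iii) *)
  (exists phis : C0 E a b,
     [/\ is_const phis, T phis = phis c, 1 <= alpha (phis c) (T phis) &
         forall psi : C0 E a b,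
           is_const psi -> T psi = psi c -> 1 <= alpha (psi c) (T psi) ->
           psi = phis]).
Proof.
move=> _ k_ge0 k_lt1 contr adm closed [phi0 phi0_start].
have x0_start := starting_T adm phi0_start.
split; first by exists (cst (T phi0)); split; [exact: is_const_cst|].
split=> [phi _|].
  exact: (const_picard_cvg k_ge0 k_lt1 contr adm closed).
have [l _ [l_start Tl]] :=
  iter_Tcst_fixpoint k_ge0 k_lt1 contr adm closed x0_start.
exists (cst l); split=> //; first exact: is_const_cst.
move=> psi psi_const Tpsi psi_start; rewrite (is_constE c psi_const).
congr cst; apply: (starting_fixpoint_unique k_ge0 k_lt1 contr adm) => //.
- exact: starting_const.
- by rewrite (Tcst_const psi_const).
Qed.
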